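(* Let $X$ be a topological space and $A$ a finitely non-Hausdorff subset of $X$. Then $\overline{A}$ is a finitely non-Hausdorff subset of $X$.
   Context: A non-empty subset $A$ of a topological space $X$ is called finitely non-Hausdorff if for every non-empty finite subset $F\subseteq A$ and every family $\{U_x:x\in F\}$ where each $U_x$ is an open neighborhood of $x$, we have $\bigcap_{x\in F}U_x\neq\emptyset$. *)

From HB Require Import structures.
From mathcomp Require Import all_boot all_order.
From mathcomp Require Import all_classical topology.
Set Implicit Arguments. Unset Strict Implicit. Unset Printing Implicit Defensive.
Local Open Scope classical_set_scope.

Definition finitely_non_hausdorff (X : topologicalType) (A : set X) : Prop :=
  A !=set0 /\
  forall (F : set X) (U : X -> set X),
    finite_set F -> F !=set0 -> F `<=` A ->
    (forall x, F x -> open (U x) /\ U x x) ->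
    \bigcap_(x in F) U x !=set0.

From HB Require Import structures.
From mathcomp Require Import all_boot all_order.
From mathcomp Require Import all_classical topology.
Set Implicit Arguments. Unset Strict Implicit. Unset Printing Implicit Defensive.
Local Open Scope classical_set_scope.

(* Pick, for each x in F, a point f x of A inside U x.  The finitely many
   points f x need not be distinct, so to the point a of A we attach the
   intersection of the U x over the fibre of f above a: an open neighbourhood
   of a.  A point common to these neighbourhoods lies in every U x. *)

Lemma filter_bigcap_finite (T : Type) (I : choiceType) (F : set_system T)
    (D : set I) (f : I -> set T) :
  Filter F -> finite_set D -> (forall i, D i -> F (f i)) ->
  F (\bigcap_(i in D) f i).
Proof.
move=> FF /finite_fsetP[E ->] Ff.
by apply: filter_bigI => i iE; exact: Ff.
Qed.

Lemma open_bigcap_finite (T : topologicalType) (I : choiceType) (D : set I)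
    (f : I -> set T) :
  finite_set D -> (forall i, D i -> open (f i)) -> open (\bigcap_(i in D) f i).
Proof.
move=> finD oD; rewrite openE => x fx.
apply: filter_bigcap_finite => // i Di.
by apply: open_nbhs_nbhs; split; [exact: oD | exact: fx].
Qed.

Lemma closure_meets_open (T : topologicalType) (A U : set T) (x : T) :
  closure A x -> open U -> U x -> A `&` U !=set0.
Proof. by move=> clx oU Ux; apply: clx; apply: open_nbhs_nbhs. Qed.

Lemma finitely_non_hausdorff_bigcap (X : topologicalType) (A F : set X)
    (U : X -> set X) (f : X -> X) :
  finitely_non_hausdorff A -> finite_set F -> F !=set0 ->
  (forall x, F x -> [/\ open (U x), A (f x) & U x (f x)]) ->
  \bigcap_(x in F) U x !=set0.
Proof.
move=> [_ fnhA] finF [x0 Fx0] HU.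
pose W a := \bigcap_(x in F `&` f @^-1` [set a]) U x.
have [z Wz] : \bigcap_(a in f @` F) W a !=set0.
  apply: fnhA.
  - exact: finite_image.
  - by exists (f x0), x0.
  - by move=> _ [x Fx <-]; have [] := HU x Fx.
  move=> _ [x Fx <-]; split.
    apply: open_bigcap_finite; first exact: finite_setIl.
    by move=> y [Fy _]; have [] := HU y Fy.
  by move=> y [Fy fyx]; rewrite -fyx; have [] := HU y Fy.
by exists z => x Fx; exact: (Wz (f x) (ex_intro2 _ _ x Fx erefl)).
Qed.

Theorem corollary2p7 (X : topologicalType) (A : set X) :
  finitely_non_hausdorff A -> finitely_non_hausdorff (closure A).
Proof.
move=> fnhA; have [[a Aa] _] := fnhA; split.
  by exists a; exact: subset_closure.
move=> F U finF F0 FA HU.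
have approx x : exists b, F x -> A b /\ U x b.
  have [Fx|nFx] := pselect (F x); last by exists a => /nFx.
  have [oU Ux] := HU x Fx.
  by have [b [Ab Ub]] := closure_meets_open (FA x Fx) oU Ux; exists b.
have [f Hf] := choice approx.
apply: (finitely_non_hausdorff_bigcap (f := f) fnhA finF F0) => x Fx.
have [oU _] := HU x Fx; have [Afx Ufx] := Hf x Fx.
by split.
Qed.
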